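(* Let $(p_{ij})_{i,j\in\{0,1\}}$ be a transition matrix with all $p_{ij}\in(0,1)$ and $p_{ij}\ne\tfrac12$ for some $(i,j)$; for $i\in\{0,1\}$ let $I_n^i\sim B(n,p_{i0})$. Let $(X_n^i,Z_n^i)_{n\in\mathbb N_0}$, $i\in\{0,1\}$, be random variables with finite second moments such that $X_n^i=Z_n^i=0$ for $n\le1$ and, for all $n\ge2$ and $i\in\{0,1\}$, $$\begin{pmatrix}X_n^i\\ Z_n^i\end{pmatrix}\stackrel{d}{=}\begin{pmatrix}X^0_{I_n^i}\\ Z^0_{I_n^i}\end{pmatrix}+\begin{pmatrix}X^1_{n-I_n^i}\\ Z^1_{n-I_n^i}\end{pmatrix}+\begin{pmatrix}\eta_n^{i,1}\\ \eta_n^{i,2}\end{pmatrix},$$ where on the right the families $(X^0_k,Z^0_k)_{k\le n}$, $(X^1_k,Z^1_k)_{k\le n}$ and $I_n^i$ are independent, and $$\eta_n^{i,1}=\frac1H\Big(n\log n-\mathbb E\big[I_n^i\log I_n^i+(n-I_n^i)\log(n-I_n^i)\big]\Big)+\pi_{1-i}\frac{H_{1-i}-H_i}{H}n+\frac{H_1-H_0}{(p_{01}+p_{10})H}p_{i0}p_{i1}^{n-1}n,\quad \eta_n^{i,2}=n-\eta_n^{i,1}$$ (for $n\ge2$; $\eta_n^{i,1}=\eta_n^{i,2}=0$ for $n\le1$). Then for all $n\in\mathbb N_0$, $$\mathbb E[X_n^0]=\frac1H n\log n+\frac{H_1-H_0}{(p_{01}+p_{10})H}n\mathbf 1_{\{n\ge2\}},\qquad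 \mathbb E[X_n^1]=\frac1H n\log n.$$
   Context: $0\log0:=0$. $\pi_0=p_{10}/(p_{01}+p_{10})$, $\pi_1=p_{01}/(p_{01}+p_{10})$, $H_i=-\sum_jp_{ij}\log p_{ij}$, $H=\pi_0H_0+\pi_1H_1$. *)

From HB Require Import structures.
From mathcomp Require Import all_boot all_order all_algebra.
From mathcomp Require Import all_classical all_reals all_analysis.
Set Implicit Arguments. Unset Strict Implicit. Unset Printing Implicit Defensive.
Import Order.TTheory GRing.Theory Num.Theory.
Local Open Scope classical_set_scope.
Local Open Scope ring_scope.

(* States {0,1} are encoded by bool: false = state 0, true = state 1.
   A transition matrix is p : bool -> bool -> R, p i j = p_{ij}. *)

Section Defs.
Variable R : realType.

Definition xlogx (x : R) : R := if x == 0 then 0 else x * ln x.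

Variable p : bool -> bool -> R.

Definition Hrow (i : bool) : R := - \sum_(j : bool) xlogx (p i j).

(* stationary distribution: pi_0 = p10/(p01+p10), pi_1 = p01/(p01+p10) *)
Definition pist (i : bool) : R :=
  (if i then p false true else p true false) / (p false true + p true false).

Definition Hent : R := pist false * Hrow false + pist true * Hrow true.

Definition binom_pmf (n : nat) (q : R) (k : nat) : R :=
  ('C(n, k))%:R * q ^+ k * (1 - q) ^+ (n - k).

Definition binom_expect (n : nat) (q : R) (f : nat -> R) : R :=
  \sum_(k < n.+1) binom_pmf n q k * f k.

Definition eta1 (i : bool) (n : nat) : R :=
  if (n <= 1)%N then 0 else
    Hent^-1 * (xlogx n%:R
       - binom_expect n (p i false)
           (fun k => xlogx k%:R + xlogx (n - k)%:R))
    + pist (~~ i) * (Hrow (~~ i) - Hrow i) / Hent * n%:R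
    + (Hrow true - Hrow false) / ((p false true + p true false) * Hent)
        * p i false * p i true ^+ n.-1 * n%:R.

Definition eta2 (i : bool) (n : nat) : R :=
  if (n <= 1)%N then 0 else n%:R - eta1 i n.

End Defs.

Definition same_law2 (R : realType) d (T : measurableType d) d' (T' : measurableType d')
  (P : probability T R) (X Z : T -> R) (Q : probability T' R) (X' Z' : T' -> R) :=
  forall A : set (R * R), measurable A ->
    P ((fun t => (X t, Z t)) @^-1` A) = Q ((fun w => (X' w, Z' w)) @^-1` A).

Definition is_binomial (R : realType) d (T : measurableType d) (Q : probability T R)
  (I : T -> nat) (n : nat) (q : R) :=
  forall k : nat, Q (I @^-1` [set k]) = (binom_pmf n q k)%:E.

Definition sigma_pairs (R : realType) (T : Type) (n : nat) (A B : nat -> T -> R) :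
  set (set T) :=
  g_sigma_preimage (fun (k : 'I_n.+1) (w : T) => (A k w, B k w) : R * R).

Definition sigma_nat (T : Type) (I : T -> nat) : set (set T) :=
  g_sigma_preimage (fun (_ : 'I_1) => I).

Definition indep3 (R : realType) d (T : measurableType d) (Q : probability T R)
  (F1 F2 F3 : set (set T)) :=
  forall E1 E2 E3, F1 E1 -> F2 E2 -> F3 E3 ->
    Q (E1 `&` E2 `&` E3) = (Q E1 * Q E2 * Q E3)%E.

(* Conditioning on I_n^i, which is independent of both families of copies, the means
   m_n^i = E[X_n^i] satisfy m_n^i = E[m^0_(I_n^i) + m^1_(n - I_n^i)] + eta_n^(i,1) for n >= 2.
   The closed forms satisfy the same binomial recursion (an identity that only uses
   E[I_n^i] = n p_i0 and P(I_n^i = 1) = n p_i0 p_i1^(n-1)), and both vanish for n <= 1.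
   The difference of two solutions at n only sees the extreme terms I_n^i = n and I_n^i = 0,
   so e_i = p_i0^n e_0 + p_i1^n e_1 with p_i0^n + p_i1^n < 1: it vanishes. *)

From HB Require Import structures.
From mathcomp Require Import all_boot all_order all_algebra.
From mathcomp Require Import all_classical all_reals all_analysis.
From mathcomp Require Import measurable_realfun.
From mathcomp Require Import ring lra.
Set Implicit Arguments. Unset Strict Implicit. Unset Printing Implicit Defensive.
Import Order.TTheory GRing.Theory Num.Theory.
Local Open Scope classical_set_scope.
Local Open Scope ring_scope.

Section same_law.
Local Open Scope ereal_scope.
Context d1 d2 (W1 : measurableType d1) (W2 : measurableType d2) (R : realType).
Variables (mu1 : {measure set W1 -> \bar R}) (mu2 : {measure set W2 -> \bar R}).
Variables (f1 : W1 -> R) (f2 : W2 -> R).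
Hypotheses (mf1 : measurable_fun setT f1) (mf2 : measurable_fun setT f2).
Hypothesis law : forall B, measurable B -> mu1 (f1 @^-1` B) = mu2 (f2 @^-1` B).

Lemma ge0_integral_same_law (h : R -> \bar R) : measurable_fun setT h ->
  (forall y, 0 <= h y) -> \int[mu1]_x h (f1 x) = \int[mu2]_x h (f2 x).
Proof.
move=> mh h0.
have E1 := ge0_integral_pushforward mf1 mu1 measurableT mh (fun y _ => h0 y).
have E2 := ge0_integral_pushforward mf2 mu2 measurableT mh (fun y _ => h0 y).
rewrite preimage_setT in E1 E2; rewrite -E1 -E2.
by apply: eq_measure_integral => A mA _; exact: law.
Qed.

Lemma integral_same_law : \int[mu1]_x (f1 x)%:E = \int[mu2]_x (f2 x)%:E.
Proof.
rewrite integralE [RHS]integralE; congr (_ - _).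
  under eq_integral do rewrite funeposE.
  under [RHS]eq_integral do rewrite funeposE.
  apply: (@ge0_integral_same_law (fun y => maxe y%:E 0)).
    by apply: measurable_maxe => //; exact: EFin_measurable.
  by move=> y; rewrite le_max lexx orbT.
under eq_integral do rewrite funenegE.
under [RHS]eq_integral do rewrite funenegE.
apply: (@ge0_integral_same_law (fun y => maxe (- y%:E) 0)).
  by apply: measurable_maxe => //; apply: measurableT_comp => //; exact: EFin_measurable.
by move=> y; rewrite le_max lexx orbT.
Qed.

Lemma integrable_same_law : mu1.-integrable setT (EFin \o f1) ->
  mu2.-integrable setT (EFin \o f2).
Proof.
move=> /integrableP[_ fi]; apply/integrableP; split; first exact/measurable_EFinP.
rewrite -(@ge0_integral_same_law (fun y => `|y%:E|)) //.
by apply: measurableT_comp => //; exact: measurable_EFinP.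
Qed.

End same_law.

Lemma same_law2_fst (R : realType) d (T : measurableType d) d' (T' : measurableType d')
    (P : probability T R) (X Z : T -> R) (Q : probability T' R) (X' Z' : T' -> R) :
  same_law2 P X Z Q X' Z' ->
  forall B, measurable B -> P (X @^-1` B) = Q (X' @^-1` B).
Proof.
move=> law B mB; have := law (B `*` setT) (measurableX mB measurableT).
have preX (U : Type) (F G : U -> R) :
    (fun t => (F t, G t)) @^-1` (B `*` setT) = F @^-1` B.
  by apply/seteqP; split => t /=; [case|].
by rewrite !preX.
Qed.

Lemma same_law2_expectation (R : realType) d (T : measurableType d)
    d' (T' : measurableType d') (P : probability T R) (X Z : T -> R)
    (Q : probability T' R) (X' Z' : T' -> R) :
  same_law2 P X Z Q X' Z' -> measurable_fun setT X -> measurable_fun setT X' ->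
  P.-integrable setT (EFin \o X) ->
  Q.-integrable setT (EFin \o X') /\ (\int[Q]_w (X' w)%:E = 'E_P[X])%E.
Proof.
move=> /same_law2_fst law mX mX' iX; split; first exact: integrable_same_law iX.
by rewrite unlock; apply/esym/integral_same_law.
Qed.

Lemma integrable_sqr (R : realType) d (T : measurableType d) (P : probability T R)
    (f : T -> R) : measurable_fun setT f ->
  P.-integrable setT (EFin \o (fun t => f t ^+ 2)) -> P.-integrable setT (EFin \o f).
Proof.
move=> mf fi.
have i1 : P.-integrable setT (fun t => (1 + f t ^+ 2)%:E).
  apply: (eq_integrable _ ((EFin \o cst 1) \+ (EFin \o (fun t => f t ^+ 2)))) => //.
  by apply: integrableD => //; exact: finite_measure_integrable_cst.
apply: le_integrable i1 => //; first exact/measurable_EFinP.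
move=> t _ /=; rewrite lee_fin [X in _ <= X]ger0_norm ?addr_ge0 ?sqr_ge0 //.
by have [h|h] := lerP 0 (f t); [rewrite ger0_norm | rewrite ltr0_norm]; nra.
Qed.

Section restriction.
Local Open Scope ereal_scope.
Context d (W : measurableType d) (R : realType).
Variables (Q : {measure set W -> \bar R}) (E : set W) (mE : measurable E).

Lemma ge0_integral_mrestr (h : W -> \bar R) : measurable_fun setT h ->
  (forall x, 0 <= h x) -> \int[mrestr Q mE]_x h x = \int[Q]_(x in E) h x.
Proof.
move=> mh h0.
rewrite -(setUv E) (ge0_integral_setU _ mE (measurableC mE)); first last.
- by rewrite disj_set2E setICr.
- by move=> x _; exact: h0.
- by rewrite setUv.
rewrite [X in _ + X]null_set_integral ?adde0 //; first last.
- by rewrite /= /mrestr setICl; exact: measure0.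
- exact: measurable_funS mh.
- exact: measurableC.
by apply: eq_measure_integral => A mA AE; rewrite /= /mrestr setIidl.
Qed.

Lemma integral_mrestr (f : W -> R) : measurable_fun setT f ->
  \int[mrestr Q mE]_x (f x)%:E = \int[Q]_(x in E) (f x)%:E.
Proof.
move=> mf; have mfE : measurable_fun [set: W] (EFin \o f) by exact/measurable_EFinP.
rewrite [LHS]integralE [RHS]integralE; congr (_ - _).
  by rewrite ge0_integral_mrestr //; exact: measurable_funepos.
by rewrite ge0_integral_mrestr //; exact: measurable_funeneg.
Qed.

End restriction.

Section independent_event.
Local Open Scope ereal_scope.

Lemma integral_mscale (R : realType) d (W : measurableType d)
    (Q : {measure set W -> \bar R}) (k : {nonneg R}) (f : W -> R) :
  Q.-integrable setT (EFin \o f) ->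
  \int[mscale k Q]_x (f x)%:E = k%:num%:E * \int[Q]_x (f x)%:E.
Proof.
move=> fi; have mfE : measurable_fun [set: W] (EFin \o f) by exact: measurable_int fi.
rewrite [LHS]integralE [X in _ = _ * X]integralE.
have Hp := ge0_integral_mscale Q measurableT k (measurable_funepos mfE)
  (fun x _ => funepos_ge0 _ x).
have Hn := ge0_integral_mscale Q measurableT k (measurable_funeneg mfE)
  (fun x _ => funeneg_ge0 _ x).
rewrite Hp Hn [RHS]muleBr //; apply: fin_num_adde_defl; rewrite fin_numN.
exact: (integrable_fin_num measurableT (integrable_funeneg measurableT fi)).
Qed.

Definition indep_event (R : realType) d (W : measurableType d)
    (Q : probability W R) (f : W -> R) (E : set W) :=
  forall B, measurable B -> Q (f @^-1` B `&` E) = Q (f @^-1` B) * Q E.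

(* Restricting [Q] to [E] and scaling [Q] by [Q E] give [f] the same law. *)
Lemma integral_indep_event (R : realType) d (W : measurableType d)
    (Q : probability W R) (f : W -> R) (E : set W) :
  measurable_fun setT f -> measurable E -> Q.-integrable setT (EFin \o f) ->
  indep_event Q f E ->
  \int[Q]_(x in E) (f x)%:E = Q E * \int[Q]_x (f x)%:E.
Proof.
move=> mf mE fi indep.
have QE0 : (0 <= fine (Q E))%R by apply: fine_ge0; exact: measure_ge0.
have QE : Q E = (fine (Q E))%:E by rewrite fineK // fin_num_measure.
rewrite -(integral_mrestr Q mE mf) QE -(integral_mscale (NngNum QE0) fi).
apply: integral_same_law => // B mB.
by rewrite /= /mrestr /mscale /= indep // QE muleC.
Qed.

End independent_event.

Lemma sigma_pairs_fst (R : realType) (T : Type) (n : nat) (A B : nat -> T -> R)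
    (k : nat) (C : set R) :
  (k <= n)%N -> measurable C -> sigma_pairs n A B (A k @^-1` C).
Proof.
move=> kn mC; apply: sub_sigma_algebra; rewrite -bigcup_mkord_ord.
exists k; first by rewrite /= ltnS.
exists (C `*` setT); first exact: measurableX.
rewrite setTI /= inordK ?ltnS //.
by apply/seteqP; split => t /=; [case|].
Qed.

Lemma sigma_pairsT (R : realType) (T : Type) (n : nat) (A B : nat -> T -> R) :
  sigma_pairs n A B setT.
Proof. by rewrite -(setD0 setT); apply: sigma_algebraCD; exact: sigma_algebra0. Qed.

Lemma sigma_nat_preimage1 (T : Type) (I : T -> nat) (k : nat) :
  sigma_nat I (I @^-1` [set k]).
Proof.
apply: sub_sigma_algebra; rewrite big_ord_recl big_ord0 setU0.
by exists [set k] => //; rewrite setTI.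
Qed.

Section indep3.
Local Open Scope ereal_scope.
Context (R : realType) d (W : measurableType d) (Q : probability W R).
Variables (F1 F2 F3 : set (set W)).
Hypothesis indep : indep3 Q F1 F2 F3.

Lemma indep3_13 (A C : set W) : F1 A -> F2 setT -> F3 C -> Q (A `&` C) = Q A * Q C.
Proof.
by move=> F1A F2T F3C; have := indep F1A F2T F3C; rewrite setIT probability_setT mule1.
Qed.

Lemma indep3_23 (B C : set W) : F1 setT -> F2 B -> F3 C -> Q (B `&` C) = Q B * Q C.
Proof.
by move=> F1T F2B F3C; have := indep F1T F2B F3C; rewrite setTI probability_setT mul1e.
Qed.

End indep3.

Lemma measurable_fun_nat_index (R : realType) d (W : measurableType d)
    (I : W -> nat) (F : nat -> W -> R) :
  measurable_fun setT I -> (forall k, measurable_fun setT (F k)) ->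
  measurable_fun setT (fun w => F (I w) w).
Proof.
move=> mI mF _ B mB; rewrite setTI.
have -> : (fun w => F (I w) w) @^-1` B = \bigcup_k (I @^-1` [set k] `&` F k @^-1` B).
  by apply/seteqP; split => [w Bw|w [k _ [/= -> //]]]; exists (I w).
apply: bigcupT_measurable => k; apply: measurableI.
  by rewrite -(setTI (I @^-1` _)); exact: mI.
by rewrite -(setTI (F k @^-1` _)); exact: mF.
Qed.

Section nat_index.
Local Open Scope ereal_scope.
Context (R : realType) d (W : measurableType d) (Q : {measure set W -> \bar R}).
Variables (I : W -> nat) (n : nat).
Hypothesis mI : measurable_fun setT I.

Lemma measurable_preimage1 (k : nat) : measurable (I @^-1` [set k]).
Proof. by rewrite -(setTI (I @^-1` _)); exact: mI. Qed.

Lemma integral_nat_index (h : nat -> W -> R) :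
  (forall k, measurable_fun setT (h k)) -> {ae Q, forall w, (I w <= n)%N} ->
  \int[Q]_w (h (I w) w)%:E =
    \sum_(k < n.+1) \int[Q]_(w in I @^-1` [set (k : nat)]) (h k w)%:E.
Proof.
move=> mh Ile.
rewrite -(big_mkord xpredT (fun k => \int[Q]_(w in I @^-1` [set k]) (h k w)%:E)).
set S := \big[setU/set0]_(k <- index_iota 0 n.+1) I @^-1` [set k].
have mS : measurable S by apply: bigsetU_measurable => k _; exact: measurable_preimage1.
have mhI : measurable_fun setT (EFin \o fun w => h (I w) w).
  exact/measurable_EFinP/measurable_fun_nat_index.
transitivity (\int[Q]_(w in S) (h (I w) w)%:E).
  rewrite [RHS]integral_mkcond; apply: ae_eq_integral => //.
    by apply/(measurable_restrictT _ _).1 => //; exact: measurable_funS mhI.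
  apply: filterS Ile => w Iw _; rewrite patchE mem_set //.
  rewrite /S -bigcup_seq; exists (I w) => //=.
  by rewrite mem_index_iota.
rewrite integral_bigsetU_EFin //.
- apply: eq_bigr => k _; apply: eq_integral => w.
  by rewrite inE /= => ->.
- exact: measurable_preimage1.
- exact: iota_uniq.
- exact: trivIset_preimage1.
- exact: measurable_funS mhI.
Qed.

End nat_index.

Section binomial.
Context (R : realType).

Lemma binom_pmf_sum (n : nat) (q : R) : \sum_(k < n.+1) binom_pmf n q k = 1.
Proof.
have := exprDn (1 - q) q n; rewrite subrK expr1n => ->.
by apply: eq_bigr => k _; rewrite /binom_pmf -mulr_natl; ring.
Qed.

Lemma binom_pmf_mean (n : nat) (q : R) :
  \sum_(k < n.+1) binom_pmf n q k * k%:R = n%:R * q.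
Proof.
case: n => [|m]; first by rewrite big_ord1 mulr0 mul0r.
rewrite big_ord_recl /= mulr0 add0r.
transitivity (\sum_(i < m.+1) m.+1%:R * q * binom_pmf m q i).
  2: by rewrite -big_distrr /= binom_pmf_sum mulr1.
apply: eq_bigr => i _; rewrite /binom_pmf /bump /= add1n subSS.
have := congr1 (fun x => x%:R : R) (mul_bin_diag m.+1 i); rewrite !natrM /= => h.
have -> : ('C(m.+1, i.+1))%:R * q ^+ i.+1 * (1 - q) ^+ (m - i) * (i.+1)%:R
        = ((i.+1)%:R * ('C(m.+1, i.+1))%:R) * q * q ^+ i * (1 - q) ^+ (m - i).
  by rewrite exprS; ring.
by rewrite -h; ring.
Qed.

Lemma binom_pmf0 (n : nat) (q : R) : binom_pmf n q 0 = (1 - q) ^+ n.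
Proof. by rewrite /binom_pmf bin0 subn0 expr0 mulr1 mul1r. Qed.

Lemma binom_pmf1 (n : nat) (q : R) : binom_pmf n q 1 = n%:R * q * (1 - q) ^+ n.-1.
Proof. by rewrite /binom_pmf bin1 expr1 subn1. Qed.

Lemma binom_pmfn (n : nat) (q : R) : binom_pmf n q n = q ^+ n.
Proof. by rewrite /binom_pmf binn subnn expr0 mulr1 mul1r. Qed.

End binomial.

Lemma is_binomial_ae_le (R : realType) d (W : measurableType d) (Q : probability W R)
    (I : W -> nat) (n : nat) (q : R) :
  measurable_fun setT I -> is_binomial Q I n q -> {ae Q, forall w, (I w <= n)%N}.
Proof.
move=> mI bin; set S := \bigcup_(k < n.+1) I @^-1` [set k].
have mS : measurable S by apply: bigcup_measurable => k _; exact: measurable_preimage1.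
have QS : Q S = 1%E.
  rewrite /S bigcup_mkord (@measure_bigsetU _ _ _ Q (fun k => I @^-1` [set k])); first last.
  - exact: trivIset_preimage1.
  - by move=> k; exact: measurable_preimage1.
  rewrite (eq_bigr (fun k : 'I_n.+1 => (binom_pmf n q k)%:E)) => [|k _]; last exact: bin.
  by rewrite sumEFin binom_pmf_sum.
exists (~` S); split; first exact: measurableC.
  by rewrite probability_setC // QS subee.
by move=> w /= Iw [k /= kn Ik]; apply: Iw; rewrite Ik -ltnS.
Qed.

Section indep_event_affine.
Local Open Scope ereal_scope.
Context (R : realType) d (W : measurableType d) (Q : probability W R).

Lemma integral_indep_event_affine (E : set W) (f1 f2 : W -> R) (c r m1 m2 : R) :
  measurable E -> measurable_fun setT f1 -> measurable_fun setT f2 ->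
  Q.-integrable setT (EFin \o f1) -> Q.-integrable setT (EFin \o f2) ->
  indep_event Q f1 E -> indep_event Q f2 E ->
  Q E = r%:E -> \int[Q]_x (f1 x)%:E = m1%:E -> \int[Q]_x (f2 x)%:E = m2%:E ->
  \int[Q]_(x in E) (f1 x + f2 x + c)%:E = (r * (m1 + m2 + c))%:E.
Proof.
move=> mE mf1 mf2 i1 i2 ind1 ind2 QE E1 E2.
have i1E := integrableS measurableT mE (@subsetT _ E) i1.
have i2E := integrableS measurableT mE (@subsetT _ E) i2.
have icE : Q.-integrable E (fun=> c%:E) by exact: finite_measure_integrable_cst.
under eq_integral do rewrite !EFinD.
rewrite integralD //; last by apply: integrableD.
rewrite integralD // integral_cst // -[X in c%:E * X]/(Q E) QE.
rewrite (integral_indep_event mf1 mE i1 ind1) (integral_indep_event mf2 mE i2 ind2).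
rewrite QE E1 E2 -!EFinM -!EFinD.
by congr (_%:E); ring.
Qed.

End indep_event_affine.

Lemma expectation_fine (R : realType) d (T : measurableType d) (P : probability T R)
    (f : T -> R) :
  P.-integrable setT (EFin \o f) -> ('E_P[f] = (fine 'E_P[f])%:E)%E.
Proof. by move=> fi; rewrite fineK // unlock; exact: integrable_fin_num fi. Qed.

Section mean_recursion.
Context (R : realType) d (T : measurableType d) (P : probability T R).
Variables (X Z : nat -> bool -> T -> R).
Hypothesis mX : forall k j, measurable_fun setT (X k j).
Hypothesis iX : forall k j, P.-integrable setT (EFin \o X k j).
Context d' (W : measurableType d') (Q : probability W R).
Variables (X0 Z0 X1 Z1 : nat -> W -> R) (I : W -> nat) (n : nat) (i : bool) (q eta eta' : R).
Hypothesis mI : measurable_fun setT I.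
Hypothesis mX0 : forall k, measurable_fun setT (X0 k).
Hypothesis mX1 : forall k, measurable_fun setT (X1 k).
Hypothesis copies : forall k, (k <= n)%N ->
  same_law2 P (X k false) (Z k false) Q (X0 k) (Z0 k) /\
  same_law2 P (X k true) (Z k true) Q (X1 k) (Z1 k).
Hypothesis binI : is_binomial Q I n q.
Hypothesis indep : indep3 Q (sigma_pairs n X0 Z0) (sigma_pairs n X1 Z1) (sigma_nat I).
Hypothesis lawn : same_law2 P (X n i) (Z n i) Q
  (fun w => X0 (I w) w + X1 (n - I w)%N w + eta)
  (fun w => Z0 (I w) w + Z1 (n - I w)%N w + eta').

Let mean k j := fine ('E_P[X k j])%E.

Lemma copy0_mean k : (k <= n)%N ->
  Q.-integrable setT (EFin \o X0 k) /\ (\int[Q]_w (X0 k w)%:E = (mean k false)%:E)%E.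
Proof.
move=> kn; rewrite /mean -expectation_fine //.
exact: same_law2_expectation (copies kn).1 (mX k false) (mX0 k) (iX k false).
Qed.

Lemma copy1_mean k : (k <= n)%N ->
  Q.-integrable setT (EFin \o X1 k) /\ (\int[Q]_w (X1 k w)%:E = (mean k true)%:E)%E.
Proof.
move=> kn; rewrite /mean -expectation_fine //.
exact: same_law2_expectation (copies kn).2 (mX k true) (mX1 k) (iX k true).
Qed.

Lemma mean_recursion : ('E_P[X n i])%E =
  (\sum_(k < n.+1) binom_pmf n q k * (mean k false + mean (n - k)%N true + eta))%:E.
Proof.
pose h k w := X0 k w + X1 (n - k)%N w + eta.
have mh k : measurable_fun setT (h k).
  by apply: measurable_funD => //; exact: measurable_funD.
have mhI : measurable_fun setT (fun w => h (I w) w) by exact: measurable_fun_nat_index.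
rewrite -(same_law2_expectation lawn (mX n i) mhI (iX n i)).2.
rewrite (integral_nat_index mI mh (is_binomial_ae_le mI binI)) -sumEFin.
apply: eq_bigr => k _; have kn : (k <= n)%N by rewrite -ltnS.
have [i0 e0] := copy0_mean kn; have [i1 e1] := copy1_mean (leq_subr k n).
apply: integral_indep_event_affine => //; first exact: measurable_preimage1.
- move=> B mB; apply: (indep3_13 indep) => //.
  + exact: sigma_pairs_fst.
  + exact: sigma_pairsT.
  + exact: sigma_nat_preimage1.
- move=> B mB; apply: (indep3_23 indep) => //.
  + exact: sigma_pairsT.
  + exact: sigma_pairs_fst (leq_subr k n) mB.
  + exact: sigma_nat_preimage1.
Qed.

End mean_recursion.

Lemma eq0_subcontraction2 (R : realFieldType) (a0 b0 a1 b1 e0 e1 : R) :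
  0 <= a0 -> 0 <= b0 -> 0 <= a1 -> 0 <= b1 -> a0 + b0 < 1 -> a1 + b1 < 1 ->
  e0 = a0 * e0 + b0 * e1 -> e1 = a1 * e0 + b1 * e1 -> e0 = 0 /\ e1 = 0.
Proof.
move=> a0ge0 b0ge0 a1ge0 b1ge0 row0 row1 E0 E1.
have det_gt0 : 0 < (1 - a0) * (1 - b1) - a1 * b0 by nra.
have e0_det : e0 * ((1 - a0) * (1 - b1) - a1 * b0) = 0.
  have -> : e0 * ((1 - a0) * (1 - b1) - a1 * b0) =
      (1 - b1) * (e0 - (a0 * e0 + b0 * e1)) + b0 * (e1 - (a1 * e0 + b1 * e1)) by ring.
  by rewrite -E0 -E1 !subrr !mulr0 addr0.
have e00 : e0 = 0 by move/eqP: e0_det; rewrite mulf_eq0 (gt_eqF det_gt0) orbF => /eqP.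
split => //; move: E1; rewrite e00 mulr0 add0r => E1.
have : (1 - b1) * e1 = 0 by rewrite mulrBl mul1r -E1 subrr.
move/eqP; rewrite mulf_eq0 subr_eq0 => /orP[/eqP b1E|/eqP //].
by move: row1; rewrite -b1E; lra.
Qed.

Lemma sum_mul_vanish_lt (R : pzRingType) (n : nat) (b u : nat -> R) :
  (forall k, (k < n)%N -> u k = 0) -> \sum_(k < n.+1) b k * u k = b n * u n.
Proof. by move=> u0; rewrite big_ord_recr /= big1 ?add0r // => k _; rewrite u0 ?mulr0. Qed.

Lemma sum_mul_vanish_subn (R : pzRingType) (n : nat) (b v : nat -> R) :
  (forall k, (k < n)%N -> v k = 0) -> \sum_(k < n.+1) b k * v (n - k)%N = b 0%N * v n.
Proof.
move=> v0; rewrite big_ord_recl /= subn0 big1 ?addr0 // => k _.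
by rewrite v0 ?mulr0 //= /bump /= ltn_subrL add1n /= (leq_ltn_trans _ (ltn_ord k)).
Qed.

Section binomial_recursion.
Context (R : realType) (q : bool -> R) (c : nat -> bool -> R).
Hypothesis q01 : forall j, 0 < q j < 1.

Definition binomial_recursion (a : nat -> bool -> R) := forall n j, (2 <= n)%N ->
  a n j = \sum_(k < n.+1) binom_pmf n (q j) k * (a k false + a (n - k)%N true + c n j).

Lemma binomial_recursion_unique (a b : nat -> bool -> R) :
  binomial_recursion a -> binomial_recursion b ->
  (forall n j, (n <= 1)%N -> a n j = b n j) -> forall n j, a n j = b n j.
Proof.
move=> reca recb base; elim/ltn_ind => n IH.
have [/base //|n_gt1] := leqP n 1.
pose e j := a n j - b n j.
have e_rec j : e j = q j ^+ n * e false + (1 - q j) ^+ n * e true.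
  rewrite {1}/e (reca n j) // (recb n j) // -sumrB.
  rewrite (eq_bigr (fun k : 'I_n.+1 =>
    binom_pmf n (q j) k * (a k false - b k false) +
    binom_pmf n (q j) k * (a (n - k)%N true - b (n - k)%N true))) => [|k _]; last by ring.
  rewrite big_split /=.
  rewrite (@sum_mul_vanish_lt _ n (binom_pmf n (q j)) (fun k => a k false - b k false)).
    rewrite (@sum_mul_vanish_subn _ n (binom_pmf n (q j)) (fun k => a k true - b k true)).
      by rewrite binom_pmfn binom_pmf0.
    by move=> k kn; rewrite IH ?subrr.
  by move=> k kn; rewrite IH ?subrr.
have q_lt1 j : q j ^+ n + (1 - q j) ^+ n < 1.
  have [q0 q1] := andP (q01 j).
  have qn : q j ^+ n < q j by rewrite -[ltRHS]expr1 ltr_iXn2l.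
  have q'n : (1 - q j) ^+ n < 1 - q j by rewrite -[ltRHS]expr1 ltr_iXn2l ?subr_gt0 //; lra.
  lra.
have q_ge0 j : 0 <= q j ^+ n by rewrite exprn_ge0 // ltW //; case/andP: (q01 j).
have q'_ge0 j : 0 <= (1 - q j) ^+ n.
  by rewrite exprn_ge0 // subr_ge0 ltW //; case/andP: (q01 j).
have [e0 e1] := eq0_subcontraction2 (q_ge0 false) (q'_ge0 false) (q_ge0 true)
  (q'_ge0 true) (q_lt1 false) (q_lt1 true) (e_rec false) (e_rec true).
by move=> j; apply/eqP; rewrite -subr_eq0; case: j; apply/eqP.
Qed.

End binomial_recursion.

Section mean_formula.
Context (R : realType) (p : bool -> bool -> R).
Hypothesis p_row : forall i, p i false + p i true = 1.

Definition mean_shift : R :=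
  (Hrow p true - Hrow p false) / ((p false true + p true false) * Hent p).

Definition mean_formula (n : nat) (i : bool) : R :=
  if i then (Hent p)^-1 * xlogx n%:R
  else (Hent p)^-1 * xlogx n%:R + mean_shift * n%:R * (if (2 <= n)%N then 1 else 0).

Lemma mean_formula_small (n : nat) (i : bool) : (n <= 1)%N -> mean_formula n i = 0.
Proof.
have xlogx0 : xlogx (0%:R : R) = 0 by rewrite /xlogx eqxx.
have xlogx1 : xlogx (1%:R : R) = 0 by rewrite /xlogx oner_eq0 ln1 mulr0.
by case: n => [|[|//]] _; case: i; rewrite /mean_formula ?xlogx0 ?xlogx1 /= !mulr0 ?addr0.
Qed.

Lemma natr_ge2 (k : nat) :
  k%:R * (if (2 <= k)%N then 1 else 0) = k%:R - (k == 1)%:R :> R.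
Proof. by case: k => [|[|k]] /=; rewrite ?mulr0 ?subr0 ?mulr1 ?subrr. Qed.

Lemma sum_mul_eq1 (n : nat) (b : nat -> R) : (1 <= n)%N ->
  \sum_(k < n.+1) b k * ((k : nat) == 1)%:R = b 1.
Proof.
move=> n_ge1; have lt1n : (1 < n.+1)%N by rewrite ltnS.
rewrite (bigD1 (Ordinal lt1n)) //= big1 ?addr0 ?mulr1 // => k k1.
rewrite (_ : (k : nat) == 1 = false) ?mulr0 //.
by apply/negbTE; apply: contra k1 => /eqP k1; apply/eqP/val_inj.
Qed.

Lemma mean_formula_rec :
  binomial_recursion (fun j => p j false) (fun n j => eta1 p j n) mean_formula.
Proof.
move=> n i n_ge2.
set BE := binom_expect n (p i false) (fun k => xlogx k%:R + xlogx (n - k)%:R).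
have eta1E : eta1 p i n = (Hent p)^-1 * (xlogx n%:R - BE)
    + pist p (~~ i) * (Hrow p (~~ i) - Hrow p i) / Hent p * n%:R
    + mean_shift * p i false * p i true ^+ n.-1 * n%:R.
  by rewrite /eta1 leqNgt n_ge2.
have -> : \sum_(k < n.+1) binom_pmf n (p i false) k *
    (mean_formula k false + mean_formula (n - k)%N true + eta1 p i n)
  = (Hent p)^-1 * BE + mean_shift * (\sum_(k < n.+1) binom_pmf n (p i false) k * k%:R)
    - mean_shift * (\sum_(k < n.+1) binom_pmf n (p i false) k * ((k : nat) == 1)%:R)
    + eta1 p i n * (\sum_(k < n.+1) binom_pmf n (p i false) k).
  rewrite /BE /binom_expect !big_distrr /= -!big_split /= -sumrB -big_split /=.
  by apply: eq_bigr => k _; rewrite /mean_formula -mulrA natr_ge2; ring.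
rewrite binom_pmf_mean sum_mul_eq1 ?(leq_trans _ n_ge2) // binom_pmf_sum binom_pmf1.
have p_i1 : 1 - p i false = p i true by rewrite -(p_row i) addrC addKr.
rewrite mulr1 eta1E p_i1 /mean_formula /mean_shift /pist invfM n_ge2.
clearbody BE; case: i {eta1E p_i1} => /=.
  have -> : p true false = 1 - p true true by rewrite -(p_row true) addrK.
  ring.
have -> : p false false = 1 - p false true by rewrite -(p_row false) addrK.
ring.
Qed.

End mean_formula.

Theorem lemma6p3 (R : realType) (p : bool -> bool -> R)
  (d : measure_display) (T : measurableType d) (P : probability T R)
  (X Z : nat -> bool -> T -> R) :
  (* transition matrix with all entries in (0,1), some entry <> 1/2 *)
  (forall i j, 0 < p i j < 1) ->
  (forall i, p i false + p i true = 1) ->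
  (exists i j, p i j != 2^-1) ->
  (* measurable, with finite second moments *)
  (forall n i, measurable_fun setT (X n i) /\ measurable_fun setT (Z n i)) ->
  (forall n i, P.-integrable setT (EFin \o (fun t => X n i t ^+ 2)) /\
               P.-integrable setT (EFin \o (fun t => Z n i t ^+ 2))) ->
  (* initial values *)
  (forall n i, (n <= 1)%N -> forall t, X n i t = 0 /\ Z n i t = 0) ->
  (* distributional recursion with independent copies *)
  (forall n i, (2 <= n)%N ->
     exists (d' : measure_display) (W : measurableType d') (Q : probability W R)
            (X0 Z0 X1 Z1 : nat -> W -> R) (I : W -> nat),
       measurable_fun setT I /\
       (forall k, measurable_fun setT (X0 k) /\ measurable_fun setT (Z0 k) /\
                  measurable_fun setT (X1 k) /\ measurable_fun setT (Z1 k)) /\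
       (forall k, (k <= n)%N ->
          same_law2 P (X k false) (Z k false) Q (X0 k) (Z0 k) /\
          same_law2 P (X k true) (Z k true) Q (X1 k) (Z1 k)) /\
       is_binomial Q I n (p i false) /\
       indep3 Q (sigma_pairs n X0 Z0) (sigma_pairs n X1 Z1) (sigma_nat I) /\
       same_law2 P (X n i) (Z n i) Q
         (fun w => X0 (I w) w + X1 (n - I w)%N w + eta1 p i n)
         (fun w => Z0 (I w) w + Z1 (n - I w)%N w + eta2 p i n)) ->
  forall n : nat,
    ('E_P[X n false])%E =
      ((Hent p)^-1 * xlogx n%:R
       + (Hrow p true - Hrow p false) / ((p false true + p true false) * Hent p)
         * n%:R * (if (2 <= n)%N then 1 else 0))%:E /\
    ('E_P[X n true])%E = ((Hent p)^-1 * xlogx n%:R)%:E.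
Proof.
move=> p01 p_row _ mXZ sqX0 init rec.
have mX k j : measurable_fun setT (X k j) := (mXZ k j).1.
have iX k j : P.-integrable setT (EFin \o X k j) := integrable_sqr (mX k j) (sqX0 k j).1.
suff meanE k j : fine ('E_P[X k j])%E = mean_formula p k j.
  by move=> n; rewrite (expectation_fine (iX n false)) (expectation_fine (iX n true)) !meanE.
move: k j; apply: (binomial_recursion_unique (fun j => p01 j false)).
- move=> n j n_ge2.
  have [d' [W [Q [X0 [Z0 [X1 [Z1 [I [mI [mC [copies [binI [indep lawn]]]]]]]]]]]]] :=
    rec n j n_ge2.
  have mX0 k : measurable_fun setT (X0 k) by case: (mC k).
  have mX1 k : measurable_fun setT (X1 k) by case: (mC k) => _ [_ []].
  by rewrite (mean_recursion mX iX mI mX0 mX1 copies binI indep lawn).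
- exact: mean_formula_rec.
- move=> n j n_le1; rewrite mean_formula_small //.
  have -> : X n j = cst 0 by apply/funext => t; rewrite (init n j n_le1 t).1.
  by rewrite expectation_cst.
Qed.
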